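(* Under the hypotheses of the previous lemma (reals $p_j\ge0$, $x_j$, $x_{\{j\}\cup\{j'\}}$ with nonnegative symmetric entries, $x_{\{j\}\cup\{j\}}=x_j\ge 0$, and PSD matrix $X$ with $X_{0,0}=1$, $X_{0,j}=x_j$, $X_{j,j'}=x_{\{j\}\cup\{j'\}}$), let $G\subseteq\{1,\dots,n'\}$, $\bar G=\{1,\dots,n'\}\setminus G$, $L=\sum_{j=1}^{n'}x_jp_j$, $Q=\sum_{j=1}^{n'}x_jp_j^2$, $\bar L=\sum_{j\in\bar G}x_jp_j$, $\bar Q=\sum_{j\in\bar G}x_jp_j^2$, and $R=\sum_{j=1}^{n'}p_j\big(p_1x_{\{j\}\cup\{1\}}+\dots+p_jx_{\{j\}\cup\{j\}}\big)$. Then $R\ge Q$, $R\ge \tfrac12(Q+L^2)$, and $R\ge \tfrac12(\bar Q+Q+(L-\bar L)^2)$. *)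

From HB Require Import structures.
From mathcomp Require Import all_boot all_order all_algebra.
Set Implicit Arguments. Unset Strict Implicit. Unset Printing Implicit Defensive.
Import Order.TTheory GRing.Theory Num.Theory.
Local Open Scope ring_scope.

Definition psd (R : realFieldType) (m : nat) (X : 'M[R]_m) : Prop :=
  X^T = X /\ forall v : 'cV[R]_m, 0 <= (v^T *m X *m v) 0 0.

From HB Require Import structures.
From mathcomp Require Import all_boot all_order all_algebra.
From mathcomp Require Import ring lra.

Set Implicit Arguments.
Unset Strict Implicit.
Import Order.TTheory GRing.Theory Num.Theory.
Local Open Scope ring_scope.

(* Let [S q := sum_{i,j} q_i q_j x_{{i} u {j}}].  By symmetry of the pairwise
   values, [2 R = Q + S p].  Positive semidefiniteness of the bordered matrix X
   gives [(sum_j x_j q_j)^2 <= S q] for every q, and nonnegativity of the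
   off-diagonal terms gives [Q <= S p].  For the third bound take for q the
   restriction of p to G: its linear sum is [L - Lbar], while [S p - S q]
   dominates its diagonal part, which is [Qbar]. *)

Lemma mulmx_trmx_cV_00 (R : comPzRingType) m (X : 'M[R]_m) (v : 'I_m -> R) :
  ((\col_i v i)^T *m X *m (\col_i v i)) 0 0 = \sum_k \sum_i v i * X i k * v k.
Proof.
rewrite mxE; apply: eq_bigr => k _; rewrite mxE mulr_suml.
by apply: eq_bigr => i _; rewrite !mxE.
Qed.

Lemma sum_diag_le_sum (R : numDomainType) n (f : 'I_n -> 'I_n -> R) :
  (forall i j, 0 <= f i j) -> \sum_i f i i <= \sum_i \sum_j f i j.
Proof.
move=> f_ge0; apply: ler_sum => i _; rewrite (bigD1 i) //= lerDl.
by apply: sumr_ge0.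
Qed.

Lemma sum_lower_triangle_sym (R : comPzRingType) n (f : 'I_n -> 'I_n -> R) :
  (forall i j, f i j = f j i) ->
  2 * \sum_(i < n) \sum_(j < n | (j <= i)%N) f i j =
  \sum_i f i i + \sum_i \sum_j f i j.
Proof.
move=> fC.
have ord_split (i j : 'I_n) : (j != i) = (j < i)%N || (i < j)%N.
  by rewrite -val_eqE /=; case: ltngtP.
have lower (i : 'I_n) : \sum_(j < n | (j <= i)%N) f i j =
               f i i + \sum_(j < n | (j < i)%N) f i j.
  rewrite (bigD1 i) //=; congr (_ + _); apply: eq_bigl => j.
  by rewrite ord_split; case: ltngtP.
have row (i : 'I_n) : \sum_j f i j = f i i + \sum_(j < n | (j < i)%N) f i j
                                  + \sum_(j < n | (i < j)%N) f i j.
  rewrite (bigD1 i) //= (bigID (fun j : 'I_n => (j < i)%N)) /= addrA.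
  by congr (_ + _ + _); apply: eq_bigl => j; rewrite ord_split; case: ltngtP.
have upper_eq_lower : \sum_(i < n) \sum_(j < n | (i < j)%N) f i j =
                      \sum_(i < n) \sum_(j < n | (j < i)%N) f i j.
  under eq_bigr => i _ do rewrite big_mkcond.
  rewrite exchange_big; apply: eq_bigr => i _; rewrite [RHS]big_mkcond.
  by apply: eq_bigr => j _; rewrite fC.
under eq_bigr => i _ do rewrite lower.
under [X in _ = _ + X]eq_bigr => i _ do rewrite row.
rewrite !big_split /= upper_eq_lower; ring.
Qed.

Section BorderedPSD.

Variables (R : realFieldType) (n : nat) (y : 'I_n -> 'I_n -> R).

Definition pair_form (q : 'I_n -> R) := \sum_i \sum_j q i * q j * y i j.

Lemma pair_form_diag_le (hy : forall i j, 0 <= y i j) (p q : 'I_n -> R) :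
    (forall i, 0 <= q i <= p i) ->
  \sum_i (p i ^+ 2 - q i ^+ 2) * y i i <= pair_form p - pair_form q.
Proof.
move=> qp; rewrite /pair_form -sumrB.
under [X in _ <= X]eq_bigr => i _ do rewrite -sumrB.
have -> : \sum_i (p i ^+ 2 - q i ^+ 2) * y i i =
          \sum_i (p i * p i * y i i - q i * q i * y i i).
  by apply: eq_bigr => i _; rewrite !expr2 mulrBl.
apply: sum_diag_le_sum => i j; rewrite -mulrBl mulr_ge0 // subr_ge0.
have /andP[qi0 qip] := qp i; have /andP[qj0 qjp] := qp j.
by apply: ler_pM.
Qed.

Variables (x : 'I_n -> R) (X : 'M[R]_n.+1).
Hypotheses (hX : psd X) (hX00 : X ord0 ord0 = 1)
  (hX0j : forall j, X ord0 (lift ord0 j) = x j)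
  (hXjj : forall j j', X (lift ord0 j) (lift ord0 j') = y j j').

(* Evaluate the quadratic form of X at the vector [(-c, q)] with
   [c = sum_j x_j q_j]: it equals [S q - c^2]. *)
Lemma sqr_sum_le_pair_form (q : 'I_n -> R) :
  (\sum_i x i * q i) ^+ 2 <= pair_form q.
Proof.
set c := \sum_i x i * q i.
have XC i j : X i j = X j i by rewrite -{1}hX.1 mxE.
have := hX.2 (\col_(i < n.+1) if unlift ord0 i is Some j then q j else - c).
rewrite mulmx_trmx_cV_00 big_ord_recl big_ord_recl unlift_none hX00.
under eq_bigr => k _ do rewrite liftK XC hX0j.
under [X in _ + X]eq_bigr => k _ do
  (rewrite big_ord_recl unlift_none liftK hX0j;
   under eq_bigr => i _ do rewrite liftK hXjj).
have sum_qx : \sum_i q i * x i = c by apply: eq_bigr => i _; rewrite mulrC.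
have sum_cxq : \sum_i - c * x i * q i = - c * c.
  by rewrite mulr_sumr; apply: eq_bigr => i _; rewrite mulrA.
have sum_swap : \sum_(k < n) \sum_(i < n) q i * y i k * q k = pair_form q.
  rewrite exchange_big; apply: eq_bigr => i _; apply: eq_bigr => j _.
  by rewrite mulrAC.
rewrite -mulr_suml sum_qx big_split /= sum_cxq sum_swap.
have -> : - c * 1 * - c + c * - c + (- c * c + pair_form q) = pair_form q - c ^+ 2.
  by ring.
by rewrite subr_ge0.
Qed.

End BorderedPSD.

Theorem corollary1 (R : realFieldType) (n : nat)
    (p x : 'I_n -> R) (y : 'I_n -> 'I_n -> R) (X : 'M[R]_n.+1)
    (G : {set 'I_n})
    (hp : forall j, 0 <= p j)
    (hx : forall j, 0 <= x j)
    (hy : forall j j', 0 <= y j j')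
    (hysym : forall j j', y j j' = y j' j)
    (hydiag : forall j, y j j = x j)
    (hX : psd X)
    (hX00 : X ord0 ord0 = 1)
    (hX0j : forall j, X ord0 (lift ord0 j) = x j)
    (hXjj : forall j j', X (lift ord0 j) (lift ord0 j') = y j j') :
  let L := \sum_(j < n) x j * p j in
  let Q := \sum_(j < n) x j * p j ^+ 2 in
  let Lbar := \sum_(j in ~: G) x j * p j in
  let Qbar := \sum_(j in ~: G) x j * p j ^+ 2 in
  let RR := \sum_(j < n) p j * (\sum_(j' < n | (j' <= j)%N) p j' * y j j') in
  [/\ Q <= RR,
      (Q + L ^+ 2) / 2 <= RR
    & (Qbar + Q + (L - Lbar) ^+ 2) / 2 <= RR].
Proof.
move=> L Q Lbar Qbar RR.
pose pG j := if j \in G then p j else 0.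
have pG_le_p i : 0 <= pG i <= p i by rewrite /pG; case: ifP; rewrite lexx hp.
have diag_Q : \sum_i (p i ^+ 2 - 0 ^+ 2) * y i i = Q.
  by apply: eq_bigr => i _; rewrite hydiag expr0n subr0 mulrC.
have two_RR : 2 * RR = Q + pair_form y p.
  have -> : Q = \sum_i p i * p i * y i i.
    by apply: eq_bigr => i _; rewrite hydiag expr2 mulrC.
  rewrite /pair_form -sum_lower_triangle_sym; last by move=> i j; rewrite hysym [p i * _]mulrC.
  congr (_ * _); apply: eq_bigr => i _; rewrite mulr_sumr.
  by apply: eq_bigr => j _; rewrite mulrA.
have Q_le : Q <= pair_form y p.
  have zero_le_p i : 0 <= (fun=> 0 : R) i <= p i by rewrite lexx hp.
  rewrite -diag_Q -[pair_form y p]subr0; apply: le_trans (pair_form_diag_le hy zero_le_p) _.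
  rewrite lerD2l lerN2 /pair_form big1 // => i _.
  by rewrite big1 // => j _; rewrite !mul0r.
have L_le : L ^+ 2 <= pair_form y p by exact: sqr_sum_le_pair_form hX hX00 hX0j hXjj p.
have LG : L - Lbar = \sum_i x i * pG i.
  rewrite /L (bigID (mem G)) /= /Lbar.
  under [X in _ - X]eq_bigl => j do rewrite in_setC.
  rewrite addrK big_mkcond; apply: eq_bigr => i _; rewrite /pG.
  by case: (i \in G); rewrite ?mulr0.
have LG_le : (L - Lbar) ^+ 2 <= pair_form y pG.
  by rewrite LG; exact: sqr_sum_le_pair_form hX hX00 hX0j hXjj pG.
have Qbar_le : Qbar <= pair_form y p - pair_form y pG.
  apply: le_trans (pair_form_diag_le hy pG_le_p); rewrite /Qbar big_mkcond.
  apply/ler_sum => i _; rewrite /pG in_setC hydiag.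
  by case: (i \in G); rewrite /= ?subrr ?mul0r // expr0n subr0 mulrC.
split; lra.
Qed.
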